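(* $\displaystyle\int_0^{\infty}\left[\sinh^{-1}(\cosh u) - u\right]\,du = \frac{\pi^2}{16}$.
   Context: $\sinh^{-1}$ denotes the real inverse hyperbolic sine, $\sinh^{-1}x = \ln\!\left(x+\sqrt{x^2+1}\right)$ for all real $x$. *)

From Stdlib Require Export Reals.
From Coquelicot Require Export Coquelicot.
Open Scope R_scope.
(* Stdlib's [arcsinh x := ln (x + sqrt (x ^ 2 + 1))] (Rpower.v) is exactly the
   real inverse hyperbolic sine of the paper; [cosh] is Stdlib's (Rtrigo_def). *)

(* With a := arcsinh (cosh u), the numbers Ap := a + u and Am := a - u satisfy
   sinh Ap * sinh Am = sinh a ^ 2 - sinh u ^ 2 = 1, and their derivatives are
   linked by Am' = - Ap' * sinh Am and Ap' = - Am' * sinh Ap.  Hence if G' w = w / sinh w,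
   then H := (G Ap - G Am) / 4 + u * Am / 2 satisfies H' = Am and H 0 = 0.  Such a G is
   G w = int_0^(PI/2) atan (sinh w * sin s) ds, which tends to (PI/2)^2 as w -> +oo;
   since Am -> 0 and u * Am -> 0, H tends to (PI/2)^2 / 4 = PI^2 / 16. *)

From Stdlib Require Import Reals Lra Psatz.
From Coquelicot Require Import Coquelicot.
Open Scope R_scope.

Lemma cosh_plus_sinh x : cosh x + sinh x = exp x.
Proof. unfold cosh, sinh; field. Qed.

Lemma cosh_minus_sinh x : cosh x - sinh x = exp (- x).
Proof. unfold cosh, sinh; field. Qed.

Lemma cosh_sq_sub_sinh_sq x : cosh x ^ 2 - sinh x ^ 2 = 1.
Proof.
  replace (cosh x ^ 2 - sinh x ^ 2) with ((cosh x + sinh x) * (cosh x - sinh x)) by ring.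
  rewrite cosh_plus_sinh, cosh_minus_sinh, <- exp_plus, Rplus_opp_r; apply exp_0.
Qed.

Lemma cosh_pos x : 0 < cosh x.
Proof. unfold cosh; generalize (exp_pos x) (exp_pos (- x)); lra. Qed.

Lemma abs_sinh_lt_cosh x : - cosh x < sinh x < cosh x.
Proof.
  generalize (cosh_plus_sinh x) (cosh_minus_sinh x) (exp_pos x) (exp_pos (- x)); lra.
Qed.

Lemma cosh_add_sinh_mul_pos w t : -1 <= t <= 1 -> 0 < cosh w + sinh w * t.
Proof. generalize (abs_sinh_lt_cosh w); destruct (Rle_dec 0 (sinh w)); nra. Qed.

Lemma sinh_add x y : sinh (x + y) = sinh x * cosh y + cosh x * sinh y.
Proof. unfold sinh, cosh; rewrite Ropp_plus_distr, !exp_plus; field. Qed.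

Lemma sinh_sub x y : sinh (x - y) = sinh x * cosh y - cosh x * sinh y.
Proof. unfold sinh, cosh, Rminus; rewrite Ropp_plus_distr, Ropp_involutive, !exp_plus; field. Qed.

Lemma cosh_arcsinh x : cosh (arcsinh x) = sqrt (x ^ 2 + 1).
Proof.
  rewrite <- (sinh_arcsinh x) at 2.
  replace (sinh (arcsinh x) ^ 2 + 1) with (cosh (arcsinh x) ^ 2)
    by (generalize (cosh_sq_sub_sinh_sq (arcsinh x)); lra).
  rewrite sqrt_pow2; [reflexivity | apply Rlt_le, cosh_pos].
Qed.

Lemma is_derive_cosh x : is_derive cosh x (sinh x).
Proof. apply is_derive_Reals, derivable_pt_lim_cosh. Qed.

Lemma exp_opp_le_1 x : 0 <= x -> exp (- x) <= 1.
Proof.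
  intro Hx; assert (exp x * exp (- x) = 1) by (rewrite <- exp_plus, Rplus_opp_r; apply exp_0).
  generalize (exp_ineq1_le x) (exp_pos (- x)); nra.
Qed.

Lemma is_lim_sinh_p_infty : is_lim sinh p_infty p_infty.
Proof.
  apply is_lim_spec; intro M; exists (2 * Rabs M); intros x Hx.
  generalize (Rle_abs M) (Rabs_pos M) (exp_ineq1_le x) (exp_opp_le_1 x); unfold sinh; lra.
Qed.

Lemma is_lim_opp_p_infty : is_lim Ropp p_infty m_infty.
Proof. apply (is_lim_opp (fun x => x) p_infty p_infty), is_lim_id. Qed.

Lemma is_lim_exp_opp : is_lim (fun u => exp (- u)) p_infty 0.
Proof.
  apply (is_lim_comp exp Ropp p_infty 0 m_infty is_lim_exp_m is_lim_opp_p_infty).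
  exists 0; intros; discriminate.
Qed.

Lemma is_lim_mul_exp_opp : is_lim (fun u => u * exp (- u)) p_infty 0.
Proof.
  apply (is_lim_ext (fun u => - (- u * exp (- u)))); [intro; ring|].
  replace (Finite 0) with (Rbar_opp 0) by (simpl; f_equal; ring).
  apply is_lim_opp, (is_lim_comp (fun y => y * exp y) Ropp p_infty 0 m_infty);
    [apply is_lim_mul_exp_m | apply is_lim_opp_p_infty |].
  exists 0; intros; discriminate.
Qed.

Lemma one_plus_sq_pos y : 0 < 1 + y ^ 2.
Proof. nra. Qed.

Lemma sqrt_sq_add_1_pos x : 0 < sqrt (x ^ 2 + 1).
Proof. apply sqrt_lt_R0; nra. Qed.

Lemma RInt_const_R (a b c : R) : RInt (fun _ => c) a b = (b - a) * c.
Proof. rewrite RInt_const; reflexivity. Qed.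

Lemma atan_le_id x : 0 <= x -> atan x <= x.
Proof.
  intro Hx.
  assert (Hi : is_RInt (fun t => / (1 + t ^ 2)) 0 x (minus (atan x) (atan 0))).
  { apply (is_RInt_derive (V := R_CompleteNormedModule)); intros t _.
    - replace (1 + t ^ 2) with (1 + t²) by (unfold Rsqr; ring); apply is_derive_atan.
    - apply (ex_derive_continuous (K := R_AbsRing) (V := R_NormedModule)).
      auto_derive; generalize (one_plus_sq_pos t); lra. }
  assert (Hle : RInt (fun t => / (1 + t ^ 2)) 0 x <= RInt (fun _ => 1) 0 x).
  { apply RInt_le; [exact Hx | eexists; exact Hi | apply ex_RInt_const |].
    intros t _; rewrite <- Rinv_1; apply Rinv_le_contravar; [lra|].
    generalize (pow2_ge_0 t); lra. }
  rewrite (is_RInt_unique _ _ _ _ Hi), RInt_const_R, atan_0 in Hle.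
  unfold minus, plus, opp in Hle; simpl in Hle; lra.
Qed.

Lemma pi2_sub_inv_le_atan y : 0 < y -> PI / 2 - / y <= atan y.
Proof.
  intro Hy; rewrite <- (Rinv_inv y) at 2; rewrite atan_inv by (apply Rinv_0_lt_compat, Hy).
  generalize (atan_le_id (/ y) (Rlt_le _ _ (Rinv_0_lt_compat _ Hy))); lra.
Qed.

Lemma is_RInt_gen_p_infty_of_is_derive (F f : R -> R) (a l : R) :
  (forall x, is_derive F x (f x)) -> (forall x, continuous f x) -> is_lim F p_infty l ->
  is_RInt_gen f (at_point a) (Rbar_locally p_infty) (l - F a).
Proof.
  intros HF Hf Hlim.
  apply (is_RInt_gen_ext (Derive F)).
  - apply filter_forall; intros ab x _; apply is_derive_unique, HF.
  - apply is_RInt_gen_Derive.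
    + apply filter_forall; intros ab x _; eexists; apply HF.
    + apply filter_forall; intros ab x _.
      apply (continuous_ext f); [intro y; symmetry; apply is_derive_unique, HF | apply Hf].
    + intros P HP; apply (locally_singleton _ _ HP).
    + exact Hlim.
Qed.

Definition G (w : R) : R := RInt (fun s => atan (sinh w * sin s)) 0 (PI / 2).

Definition dG (w s : R) : R := cosh w * sin s / (1 + (sinh w * sin s) ^ 2).

Lemma is_derive_atan_sinh_mul s w : is_derive (fun z => atan (sinh z * sin s)) w (dG w s).
Proof.
  unfold dG, sinh, cosh; auto_derive; [easy|].
  field; generalize (one_plus_sq_pos ((exp w - exp (- w)) / 2 * sin s)); lra.
Qed.

Lemma continuity_2d_pt_dG x y : continuity_2d_pt dG x y.
Proof.
  assert (Hfst : forall g, (forall t, continuity_pt g t) -> continuity_2d_pt (fun u _ => g u) x y).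
  { intros g Hg; apply (continuity_1d_2d_pt_comp g (fun u _ => u));
      [apply Hg | apply continuity_2d_pt_id1]. }
  assert (Hsnd : forall g, (forall t, continuity_pt g t) -> continuity_2d_pt (fun _ v => g v) x y).
  { intros g Hg; apply (continuity_1d_2d_pt_comp g (fun _ v => v));
      [apply Hg | apply continuity_2d_pt_id2]. }
  assert (Hsin := Hsnd sin continuity_sin).
  assert (Hss : continuity_2d_pt (fun u v => sinh u * sin v) x y).
  { apply continuity_2d_pt_mult; [|exact Hsin].
    apply Hfst; intro t; apply derivable_continuous_pt, derivable_pt_sinh. }
  unfold dG; apply continuity_2d_pt_mult; [apply continuity_2d_pt_mult|apply continuity_2d_pt_inv].
  - apply Hfst; intro t; apply derivable_continuous_pt, derivable_pt_cosh.
  - exact Hsin.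
  - apply continuity_2d_pt_plus; [apply continuity_2d_pt_const|].
    apply continuity_2d_pt_mult; [exact Hss|].
    apply continuity_2d_pt_mult; [exact Hss|apply continuity_2d_pt_const].
  - generalize (one_plus_sq_pos (sinh x * sin y)); lra.
Qed.

Lemma ex_RInt_atan_sinh_mul w a b : ex_RInt (fun s => atan (sinh w * sin s)) a b.
Proof.
  apply (ex_RInt_continuous (V := R_CompleteNormedModule)); intros s _.
  apply (ex_derive_continuous (K := R_AbsRing) (V := R_NormedModule)).
  unfold sinh; auto_derive; easy.
Qed.

Lemma is_derive_G_RInt w : is_derive G w (RInt (dG w) 0 (PI / 2)).
Proof.
  replace (RInt (dG w) 0 (PI / 2))
    with (RInt (fun s => Derive (fun z => atan (sinh z * sin s)) w) 0 (PI / 2))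
    by (apply RInt_ext; intros s _; apply is_derive_unique, is_derive_atan_sinh_mul).
  apply (is_derive_RInt_param (fun z s => atan (sinh z * sin s))).
  - apply filter_forall; intros z s _; eexists; apply is_derive_atan_sinh_mul.
  - intros s _; apply (continuity_2d_pt_ext dG).
    + intros u v; symmetry; apply is_derive_unique, is_derive_atan_sinh_mul.
    + apply continuity_2d_pt_dG.
  - apply filter_forall; intro z; apply ex_RInt_atan_sinh_mul.
Qed.

Lemma continuous_G w : continuous G w.
Proof.
  apply (ex_derive_continuous (K := R_AbsRing) (V := R_NormedModule)).
  eexists; apply is_derive_G_RInt.
Qed.

Lemma RInt_dG w : w <> 0 -> RInt (dG w) 0 (PI / 2) = w / sinh w.
Proof.
  intro Hw.
  assert (Hsh : sinh w <> 0).
  { intro H0; apply Hw; rewrite <- (arcsinh_sinh w), H0; apply arcsinh_0. }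
  set (Phi s := (ln (cosh w - sinh w * cos s) - ln (cosh w + sinh w * cos s)) / (2 * sinh w)).
  assert (Hpos : forall s, 0 < cosh w + sinh w * cos s /\ 0 < cosh w - sinh w * cos s).
  { intro s; split.
    - apply cosh_add_sinh_mul_pos, COS_bound.
    - replace (cosh w - sinh w * cos s) with (cosh w + sinh w * (- cos s)) by ring.
      apply cosh_add_sinh_mul_pos; generalize (COS_bound s); lra. }
  rewrite (is_RInt_unique _ 0 (PI / 2) (minus (Phi (PI / 2)) (Phi 0))).
  - unfold Phi, minus, plus, opp; simpl.
    rewrite cos_PI2, cos_0, Rmult_0_r, Rminus_0_r, Rplus_0_r, Rmult_1_r,
      cosh_plus_sinh, cosh_minus_sinh, !ln_exp.
    field; exact Hsh.
  - apply (is_RInt_derive (V := R_CompleteNormedModule)); intros s _.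
    + destruct (Hpos s) as [Hp Hm].
      unfold Phi; auto_derive; [repeat split; assumption|].
      unfold dG.
      replace (1 + (sinh w * sin s) ^ 2)
        with ((cosh w + sinh w * cos s) * (cosh w - sinh w * cos s))
        by (generalize (cosh_sq_sub_sinh_sq w) (sin2_cos2 s); unfold Rsqr; nra).
      field; lra.
    + apply (ex_derive_continuous (K := R_AbsRing) (V := R_NormedModule)).
      unfold dG, sinh, cosh; auto_derive.
      generalize (one_plus_sq_pos ((exp w - exp (- w)) / 2 * sin s)); lra.
Qed.

Lemma is_derive_G w : w <> 0 -> is_derive G w (w / sinh w).
Proof. intro Hw; rewrite <- RInt_dG by exact Hw; apply is_derive_G_RInt. Qed.

Lemma G_0 : G 0 = 0.
Proof.
  unfold G; rewrite sinh_0, (RInt_ext _ (fun _ => 0)), RInt_const_R; [ring|].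
  intros s _; rewrite Rmult_0_l; apply atan_0.
Qed.

Lemma G_le w : G w <= (PI / 2) ^ 2.
Proof.
  apply (Rle_trans _ (Rabs (G w))); [apply Rle_abs|].
  replace ((PI / 2) ^ 2) with ((PI / 2 - 0) * (PI / 2)) by ring.
  apply abs_RInt_le_const; [generalize PI_RGT_0; lra | apply ex_RInt_atan_sinh_mul |].
  intros s _; generalize (atan_bound (sinh w * sin s)); unfold Rabs; destruct Rcase_abs; lra.
Qed.

Lemma G_ge w d : 0 < d < PI / 2 -> 0 < sinh w ->
  (PI / 2 - d) * (PI / 2 - / (sinh w * sin d)) <= G w.
Proof.
  intros Hd Hw.
  assert (Hsd : 0 < sin d) by (apply sin_gt_0; lra).
  unfold G; rewrite <- (RInt_Chasles (V := R_CompleteNormedModule) _ 0 d (PI / 2))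
    by apply ex_RInt_atan_sinh_mul.
  assert (Hhead : 0 <= RInt (fun s => atan (sinh w * sin s)) 0 d).
  { apply RInt_ge_0; [lra | apply ex_RInt_atan_sinh_mul |]; intros s Hs.
    rewrite <- atan_0; left; apply atan_increasing, Rmult_lt_0_compat; [exact Hw|].
    apply sin_gt_0; lra. }
  assert (Htail : RInt (fun _ => atan (sinh w * sin d)) d (PI / 2)
                  <= RInt (fun s => atan (sinh w * sin s)) d (PI / 2)).
  { apply RInt_le; [lra | apply ex_RInt_const | apply ex_RInt_atan_sinh_mul |].
    intros s Hs; destruct (Req_dec (sin d) (sin s)) as [E | E]; [rewrite E; lra|].
    left; apply atan_increasing, Rmult_lt_compat_l; [exact Hw|].
    assert (sin d <= sin s) by (apply sin_incr_1; lra); lra. }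
  rewrite RInt_const_R in Htail.
  generalize (pi2_sub_inv_le_atan (sinh w * sin d) (Rmult_lt_0_compat _ _ Hw Hsd)).
  unfold plus; simpl; nra.
Qed.

Lemma is_lim_G_p_infty : is_lim G p_infty ((PI / 2) ^ 2).
Proof.
  apply is_lim_spec; intro eps; simpl.
  generalize PI_RGT_0 PI2_1 (cond_pos eps); intros Hpi Hpi2 Heps.
  (* By [G_ge], (PI/2)^2 - G w <= PI/2 * (d + / (sinh w * sin d)): make both terms
     at most eps / PI. *)
  set (d := Rmin 1 (eps / PI)).
  assert (Hd : 0 < d <= eps / PI).
  { split; [apply Rmin_glb_lt; [lra | apply Rdiv_lt_0_compat; lra] | apply Rmin_r]. }
  assert (Hd1 : d <= 1) by apply Rmin_l.
  assert (Hsd : 0 < sin d) by (apply sin_gt_0; lra).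
  destruct (proj2 (is_lim_spec _ _ _) is_lim_sinh_p_infty (PI / (eps * sin d))) as [K HK].
  exists K; intros w Hw; specialize (HK w Hw).
  assert (HM : 0 < PI / (eps * sin d)) by (apply Rdiv_lt_0_compat; nra).
  assert (Heta : / (sinh w * sin d) < eps / PI).
  { replace (eps / PI) with (/ (PI / (eps * sin d) * sin d)) by (field; lra).
    apply Rinv_lt_contravar; [|apply Rmult_lt_compat_r; lra].
    apply Rmult_lt_0_compat; apply Rmult_lt_0_compat; lra. }
  assert (Heta0 : 0 < / (sinh w * sin d))
    by (apply Rinv_0_lt_compat, Rmult_lt_0_compat; lra).
  assert (Hge : (PI / 2 - d) * (PI / 2 - / (sinh w * sin d)) <= G w)
    by (apply G_ge; lra).
  assert (Hle := G_le w).
  set (eta := / (sinh w * sin d)) in *.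
  rewrite Rabs_left1 by lra.
  assert (PI * (eps / PI) = eps) by (field; lra).
  nra.
Qed.

Definition Am (u : R) : R := arcsinh (cosh u) - u.
Definition Ap (u : R) : R := arcsinh (cosh u) + u.
Definition d_arcsinh_cosh (u : R) : R := sinh u / sqrt (cosh u ^ 2 + 1).

Lemma is_derive_arcsinh_cosh u :
  is_derive (fun x => arcsinh (cosh x)) u (d_arcsinh_cosh u).
Proof.
  replace (d_arcsinh_cosh u) with (sinh u * / sqrt (cosh u ^ 2 + 1)) by reflexivity.
  apply (is_derive_comp arcsinh cosh); [|apply is_derive_cosh].
  apply is_derive_Reals, derivable_pt_lim_arcsinh.
Qed.

Lemma is_derive_Am u : is_derive Am u (d_arcsinh_cosh u - 1).
Proof. exact (is_derive_minus _ (fun x => x) _ _ _ (is_derive_arcsinh_cosh u) (is_derive_id u)). Qed.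

Lemma is_derive_Ap u : is_derive Ap u (d_arcsinh_cosh u + 1).
Proof. exact (is_derive_plus _ (fun x => x) _ _ _ (is_derive_arcsinh_cosh u) (is_derive_id u)). Qed.

Lemma sinh_Am u : sinh (Am u) = cosh u ^ 2 - sqrt (cosh u ^ 2 + 1) * sinh u.
Proof. unfold Am; rewrite sinh_sub, sinh_arcsinh, cosh_arcsinh; ring. Qed.

Lemma sinh_Ap u : sinh (Ap u) = cosh u ^ 2 + sqrt (cosh u ^ 2 + 1) * sinh u.
Proof. unfold Ap; rewrite sinh_add, sinh_arcsinh, cosh_arcsinh; ring. Qed.

Lemma sqrt_cosh_sq_add_1_sq u : sqrt (cosh u ^ 2 + 1) ^ 2 = cosh u ^ 2 + 1.
Proof. rewrite <- Rsqr_pow2; apply Rsqr_sqrt; nra. Qed.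

Lemma sinh_Ap_mul_sinh_Am u : sinh (Ap u) * sinh (Am u) = 1.
Proof.
  rewrite sinh_Ap, sinh_Am.
  generalize (sqrt_cosh_sq_add_1_sq u) (cosh_sq_sub_sinh_sq u); nra.
Qed.

Lemma derive_Am_eq u : d_arcsinh_cosh u - 1 = - (d_arcsinh_cosh u + 1) * sinh (Am u).
Proof.
  unfold d_arcsinh_cosh; rewrite sinh_Am.
  generalize (sqrt_cosh_sq_add_1_sq u) (cosh_sq_sub_sinh_sq u) (sqrt_sq_add_1_pos (cosh u)).
  set (r := sqrt (cosh u ^ 2 + 1)); set (c := cosh u); set (s := sinh u); intros Hr Hcs Hr0.
  assert (E : (s + r) * (c ^ 2 - r * s) = r - s).
  { transitivity (s * (c ^ 2 - r ^ 2) + r * (c ^ 2 - s ^ 2)); [ring|].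
    rewrite Hr, Hcs; ring. }
  replace (- (s / r + 1) * (c ^ 2 - r * s)) with (- ((s + r) * (c ^ 2 - r * s)) / r)
    by (field; lra).
  rewrite E; field; lra.
Qed.

Lemma derive_Ap_eq u : d_arcsinh_cosh u + 1 = - (d_arcsinh_cosh u - 1) * sinh (Ap u).
Proof.
  rewrite derive_Am_eq.
  transitivity ((d_arcsinh_cosh u + 1) * (sinh (Ap u) * sinh (Am u))); [|ring].
  rewrite sinh_Ap_mul_sinh_Am; ring.
Qed.

Lemma abs_lt_arcsinh_cosh u : - arcsinh (cosh u) < u < arcsinh (cosh u).
Proof.
  destruct (abs_sinh_lt_cosh u) as [Hl Hr]; split.
  - enough (- u < arcsinh (cosh u)) by lra.
    rewrite <- (arcsinh_sinh (- u)) at 1; apply arcsinh_lt.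
    unfold sinh in *; rewrite Ropp_involutive; lra.
  - rewrite <- (arcsinh_sinh u) at 1; apply arcsinh_lt, Hr.
Qed.

Lemma Am_pos u : 0 < Am u.
Proof. unfold Am; generalize (abs_lt_arcsinh_cosh u); lra. Qed.

Lemma Ap_pos u : 0 < Ap u.
Proof. unfold Ap; generalize (abs_lt_arcsinh_cosh u); lra. Qed.

Lemma exp_Am u : exp (Am u) = (cosh u + sqrt (cosh u ^ 2 + 1)) * exp (- u).
Proof.
  unfold Am, Rminus, arcsinh; rewrite exp_plus, exp_ln; [reflexivity|].
  generalize (cosh_pos u) (sqrt_sq_add_1_pos (cosh u)); lra.
Qed.

Lemma Am_le u : 0 <= u -> Am u <= 2 * exp (- u).
Proof.
  intro Hu.
  assert (Hexp : Am u <= exp (Am u) - 1) by (generalize (exp_ineq1_le (Am u)); lra).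
  rewrite exp_Am in Hexp.
  generalize (sqrt_cosh_sq_add_1_sq u) (sqrt_sq_add_1_pos (cosh u)) (cosh_pos u)
    (cosh_minus_sinh u) (cosh_sq_sub_sinh_sq u) (exp_opp_le_1 u Hu) (exp_pos (- u)).
  set (r := sqrt (cosh u ^ 2 + 1)) in *; set (c := cosh u) in *; set (s := sinh u);
  set (e := exp (- u)) in *; intros Hr Hr0 Hc Hm Hcs He1 He0.
  assert (Hrc : r <= c + 1) by nra.
  assert (H2ce : 2 * c * e = 1 + e ^ 2) by (rewrite <- Hm; nra).
  assert ((c + r) * e <= (2 * c + 1) * e) by (apply Rmult_le_compat_r; lra).
  assert (e ^ 2 <= e) by nra.
  lra.
Qed.

Lemma is_lim_Am : is_lim Am p_infty 0.
Proof.
  apply (is_lim_le_le_loc (fun _ => 0) (fun u => 2 * exp (- u))).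
  - exists 0; intros u Hu; split; [apply Rlt_le, Am_pos | apply Am_le; lra].
  - apply is_lim_const.
  - replace (Finite 0) with (Rbar_mult 2 0) by (simpl; f_equal; ring).
    apply is_lim_scal_l, is_lim_exp_opp.
Qed.

Lemma is_lim_mul_Am : is_lim (fun u => u * Am u) p_infty 0.
Proof.
  apply (is_lim_le_le_loc (fun _ => 0) (fun u => 2 * (u * exp (- u)))).
  - exists 0; intros u Hu; split.
    + apply Rlt_le, Rmult_lt_0_compat; [exact Hu | apply Am_pos].
    + generalize (Am_le u (Rlt_le _ _ Hu)); nra.
  - apply is_lim_const.
  - replace (Finite 0) with (Rbar_mult 2 0) by (simpl; f_equal; ring).
    apply is_lim_scal_l, is_lim_mul_exp_opp.
Qed.

Lemma is_lim_Ap : is_lim Ap p_infty p_infty.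
Proof.
  apply (is_lim_le_p_loc (fun u => u)); [|apply is_lim_id].
  exists 0; intros u Hu; unfold Ap; generalize (abs_lt_arcsinh_cosh u); lra.
Qed.

Lemma is_derive_G_comp (p : R -> R) (x dp dq : R) :
  is_derive p x dp -> p x <> 0 -> dp = - dq * sinh (p x) ->
  is_derive (fun y => G (p y)) x (- dq * p x).
Proof.
  intros Hp Hpx Hdp.
  assert (Hsh : sinh (p x) <> 0).
  { intro H0; apply Hpx; rewrite <- (arcsinh_sinh (p x)), H0; apply arcsinh_0. }
  replace (- dq * p x) with (dp * (p x / sinh (p x))) by (rewrite Hdp; field; exact Hsh).
  apply (is_derive_comp G p); [apply is_derive_G, Hpx | exact Hp].
Qed.

Definition H (u : R) : R := / 4 * (G (Ap u) - G (Am u)) + / 2 * (u * Am u).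

Lemma is_derive_H u : is_derive H u (Am u).
Proof.
  set (d := d_arcsinh_cosh u).
  assert (DP : is_derive (fun x => G (Ap x)) u (- (d - 1) * Ap u)).
  { apply is_derive_G_comp with (dp := d + 1);
      [apply is_derive_Ap | apply Rgt_not_eq, Ap_pos | apply derive_Ap_eq]. }
  assert (DM : is_derive (fun x => G (Am x)) u (- (d + 1) * Am u)).
  { apply is_derive_G_comp with (dp := d - 1);
      [apply is_derive_Am | apply Rgt_not_eq, Am_pos | apply derive_Am_eq]. }
  assert (DuM : is_derive (fun x => x * Am x) u (1 * Am u + u * (d - 1))).
  { exact (is_derive_mult (fun x => x) Am _ _ _ (is_derive_id u) (is_derive_Am u) Rmult_comm). }
  replace (Am u) with (/ 4 * (- (d - 1) * Ap u - - (d + 1) * Am u)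
                       + / 2 * (1 * Am u + u * (d - 1))) by (unfold Ap, Am; field).
  apply (is_derive_plus (fun x => / 4 * (G (Ap x) - G (Am x))) (fun x => / 2 * (x * Am x)));
    apply is_derive_scal; [|exact DuM].
  exact (is_derive_minus _ _ _ _ _ DP DM).
Qed.

Lemma H_0 : H 0 = 0.
Proof. unfold H; replace (Ap 0) with (Am 0) by (unfold Ap, Am; ring); ring. Qed.

Lemma is_lim_H : is_lim H p_infty ((PI / 2) ^ 2 / 4).
Proof.
  assert (LP : is_lim (fun u => G (Ap u)) p_infty ((PI / 2) ^ 2)).
  { apply (is_lim_comp G Ap p_infty _ p_infty is_lim_G_p_infty is_lim_Ap).
    exists 0; intros; discriminate. }
  assert (LM : is_lim (fun u => G (Am u)) p_infty 0).
  { rewrite <- G_0; apply is_lim_comp_continuous; [apply is_lim_Am | apply continuous_G]. }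
  replace ((PI / 2) ^ 2 / 4) with (/ 4 * ((PI / 2) ^ 2 - 0) + / 2 * 0) by field.
  apply (is_lim_plus' (fun u => / 4 * (G (Ap u) - G (Am u))) (fun u => / 2 * (u * Am u))).
  - apply (is_lim_scal_l _ _ _ (_ - 0)), is_lim_minus'; assumption.
  - apply (is_lim_scal_l _ _ _ 0), is_lim_mul_Am.
Qed.

Theorem theorem1 :
  is_RInt_gen (fun u : R => arcsinh (cosh u) - u)
    (at_point 0) (Rbar_locally p_infty) (PI ^ 2 / 16).
Proof.
  change (is_RInt_gen Am (at_point 0) (Rbar_locally p_infty) (PI ^ 2 / 16)).
  replace (PI ^ 2 / 16) with ((PI / 2) ^ 2 / 4 - H 0) by (rewrite H_0; field).
  apply is_RInt_gen_p_infty_of_is_derive; [exact is_derive_H | | exact is_lim_H].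
  intro x; apply (ex_derive_continuous (K := R_AbsRing) (V := R_NormedModule)).
  eexists; apply is_derive_Am.
Qed.
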